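(* Let $G$ be a split graph with vertex partition $\{X,Y\}$, where $X=\{v_1,\ldots,v_n\}$ is a maximal clique of $G$ and $Y=V(G)\setminus X$ is a stable set, and write $d_i=|N_G(v_i)\cap Y|$, with $d_1\ge\cdots\ge d_n$ and $n\ge 4$. If $d_1<\lfloor n/2\rfloor$ and $d_2=0$, then $\chi'_{\rm irr}(G)=3$.
   Context: All graphs are finite and simple. A graph is locally irregular if any two adjacent vertices have distinct degrees. A locally irregular decomposition of $G$ is a collection of locally irregular subgraphs whose edge sets partition $E(G)$; for a graph admitting one, $\chi'_{\rm irr}(G)$ is the minimum number of subgraphs in such a decomposition. *)

From mathcomp Require Import all_boot.
Set Implicit Arguments. Unset Strict Implicit. Unset Printing Implicit Defensive.

Definition simple_graph (T : finType) (e : rel T) : Prop :=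
  (forall x y, e x y = e y x) /\ (forall x, ~~ e x x).

(* An edge k-colouring: a colour for each (ordered) pair, symmetric on edges.
   Colour class i is the spanning subgraph with the edges of colour i;
   the classes partition E(G). *)
Definition edge_colouring (T : finType) (e : rel T) (k : nat)
  (c : T -> T -> 'I_k) : Prop :=
  forall x y, e x y -> c x y = c y x.

Definition cdeg (T : finType) (e : rel T) (k : nat) (c : T -> T -> 'I_k)
  (i : 'I_k) (x : T) : nat :=
  #|[set y | e x y && (c x y == i)]|.

Definition locally_irregular_colouring (T : finType) (e : rel T) (k : nat)
  (c : T -> T -> 'I_k) : Prop :=
  edge_colouring e c /\
  forall x y, e x y -> cdeg e c (c x y) x <> cdeg e c (c x y) y.

(* G admits a locally irregular decomposition into at most k subgraphs *)
Definition li_decomposable (T : finType) (e : rel T) (k : nat) : Prop :=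
  exists c : T -> T -> 'I_k, locally_irregular_colouring e c.

Definition irr_chromatic_index_is (T : finType) (e : rel T) (k : nat) : Prop :=
  li_decomposable e k /\ forall j, j < k -> ~ li_decomposable e j.

Definition clique (T : finType) (e : rel T) (X : {set T}) : Prop :=
  forall x y, x \in X -> y \in X -> x != y -> e x y.

Definition maximal_clique (T : finType) (e : rel T) (X : {set T}) : Prop :=
  clique e X /\ forall y, y \notin X -> ~ (forall x, x \in X -> e y x).

Definition stable (T : finType) (e : rel T) (Y : {set T}) : Prop :=
  forall x y, x \in Y -> y \in Y -> ~~ e x y.

Definition dY (T : finType) (e : rel T) (Y : {set T}) (v : T) : nat :=
  #|[set y in Y | e v y]|.

From mathcomp Require Import all_boot zify.
Set Implicit Arguments. Unset Strict Implicit. Unset Printing Implicit Defensive.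

(* Only v_1 has neighbours in Y, so G is the complete graph on X with
   d < n/2 pendant edges at v_1.

   Lower bound: in a decomposition of G into a red and a blue locally
   irregular subgraph, two vertices u, w other than v_1 have different red
   degrees in K_n, since the edge uw separates their degrees in its colour and
   red and blue degrees add up to n - 1.  Up to swapping the colours, these
   n - 1 red degrees are thus 0, ..., n - 2, and peeling off the extreme
   degrees shows that the red graph is the threshold graph
   "u ~ w iff deg u + deg w >= n - 1", in which v_1 behaves like a vertex of
   degree (n - 1)/2 rounded down.  The vertex whose red (n odd) or blue
   (n even) degree equals the degree of v_1 in that colour, pendant edges
   included, is then joined to v_1 in that colour; it exists as d < n/2.

   Upper bound: number the clique 0, ..., n - 1 with 0 = v_1, and let
   k = n/2 rounded down.  Colour 0 takes the clique edges pq with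
   l p + l q > 2k, where l 0 = k and l p = p otherwise, colour 1 the other
   clique edges not at 0, and colour 2 the star from 0 to 1, ..., k together
   with the pendant edges.  A vertex p > 0 has degree n + p - 1 - 2k in
   colour 0 and 2k - p - [p <= k] in colour 1. *)

Lemma count_gtn_iota a m : count (fun s => s < a) (iota 0 m) = minn a m.
Proof. by elim: m => [|m IHm] //; rewrite -addn1 iotaD count_cat IHm /=; lia. Qed.

Lemma count_leq_iota a m : count (leq a) (iota 0 m) = m - a.
Proof. by elim: m => [|m IHm] //; rewrite -addn1 iotaD count_cat IHm /=; lia. Qed.

Section TwoColouredClique.

(* [red] is one colour class of a 2-edge-colouring of the complete graph on
   [V], and [bonus b] counts extra edges of colour [b] hanging at [z]. *)
Variables (V : finType) (z : V) (red : rel V) (bonus : bool -> nat).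
Hypothesis red_sym : forall x y, red x y = red y x.

Definition coldeg b x := #|[set y | (y != x) && (red x y == b)]|.

Variable m : nat.
Hypothesis card_V : #|V| = m.+1.

Local Notation deg := (coldeg true).

Lemma coldeg_sum x : coldeg true x + coldeg false x = m.
Proof.
rewrite -[m]/(m.+1.-1) -card_V -(cardsC1 x) -(cardsID [set y | red x y]); congr (_ + _).
all: by apply: eq_card => y; rewrite !inE; case: (red x y); rewrite ?andbT ?andbF.
Qed.

Lemma eq_colour_subset x b (A : {set V}) :
  A \subset [set y | (y != x) && (red x y == b)] -> coldeg b x <= #|A| ->
  forall y, y != x -> (red x y == b) = (y \in A).
Proof.
move=> sub le_deg y neq_yx; have /eqP -> : A == [set y | (y != x) && (red x y == b)].
  by rewrite eqEcard sub.
by rewrite inE neq_yx.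
Qed.

Hypothesis irregular : forall x y, x != y ->
  coldeg (red x y) x + (x == z) * bonus (red x y) !=
  coldeg (red x y) y + (y == z) * bonus (red x y).

Lemma coldeg_inj : {in predC1 z &, injective deg}.
Proof.
move=> x y /negPf x_z /negPf y_z eq_deg; apply/eqP/negPn/negP => /irregular.
rewrite x_z y_z !addn0; have := coldeg_sum x; have := coldeg_sum y.
by case: (red x y); lia.
Qed.

Hypothesis not_full : forall x, x != z -> deg x < m.

Lemma perm_coldeg : perm_eq [seq deg x | x <- enum (predC1 z)] (iota 0 m).
Proof.
have uniq_degs : uniq [seq deg x | x <- enum (predC1 z)].
  by rewrite map_inj_in_uniq ?enum_uniq // => x y; rewrite !mem_enum; apply: coldeg_inj.
apply: uniq_perm (iota_uniq 0 m) _ => //.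
have sub_iota : {subset [seq deg x | x <- enum (predC1 z)] <= iota 0 m}.
  by move=> t /mapP[x]; rewrite mem_enum mem_iota => /not_full lt_m ->.
have [] := uniq_min_size uniq_degs sub_iota => //.
by rewrite size_map size_iota -cardE cardC1 card_V.
Qed.

Lemma card_coldeg_pred (P : pred nat) :
  #|[set x | (x != z) && P (deg x)]| = count P (iota 0 m).
Proof.
rewrite -(permP perm_coldeg) count_map cardE /enum_mem size_filter count_filter.
by apply: eq_count => x; rewrite !inE andbC.
Qed.

Lemma coldeg_onto t : t < m -> exists2 x, x != z & deg x = t.
Proof.
move=> lt_t; have : t \in iota 0 m by rewrite mem_iota.
by rewrite -(perm_mem perm_coldeg) => /mapP[x]; rewrite mem_enum; exists x.
Qed.

Definition label x := if x == z then m./2 else deg x.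
Definition level x := minn (deg x) (m.-1 - deg x).
Definition red_threshold x := forall y, y != x -> red x y = (m <= deg x + label y).

Lemma red_threshold_low x : x != z -> 2 * deg x < m ->
  (forall y, y != z -> level y < level x -> red_threshold y) -> red_threshold x.
Proof.
move=> x_z low IH.
pose A := [set y | (y != z) && (m - deg x <= deg y)].
have cardA : #|A| = deg x by rewrite card_coldeg_pred count_leq_iota; lia.
have subA : A \subset [set y | (y != x) && (red x y == true)].
  apply/subsetP => y; rewrite !inE => /andP[y_z hi_y].
  have y_x : y != x by apply: contraTneq hi_y => ->; lia.
  have lvl : level y < level x by rewrite /level; have := not_full y_z; lia.
  rewrite y_x red_sym (IH y y_z lvl x); last by rewrite eq_sym.
  by rewrite /label (negPf x_z); lia.
move=> y y_x; rewrite -[red x y]eqb_id (eq_colour_subset subA _ y_x) ?cardA //.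
by rewrite inE /label; case: (eqVneq y z) => [->|y_z]; rewrite ?eqxx ?andFb ?y_z; lia.
Qed.

Lemma red_threshold_high x : x != z -> m <= 2 * deg x ->
  (forall y, y != z -> level y < level x -> red_threshold y) -> red_threshold x.
Proof.
move=> x_z high IH.
have lt_m := not_full x_z.
have low_thr y : y != z -> deg y < m - deg x -> red_threshold y.
  move=> y_z le_yt; have [lt_yt | ge_yt] := ltnP (deg y) (m.-1 - deg x).
    by apply: IH => //; rewrite /level; lia.
  apply: red_threshold_low => // [|w w_z]; first lia.
  by move=> lvl; apply: IH => //; move: lvl; rewrite /level; lia.
pose B := [set y | (y != z) && (deg y < m - deg x)].
have cardB : #|B| = m - deg x.
  by rewrite (card_coldeg_pred (fun s => s < m - deg x)) count_gtn_iota; lia.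
have subB : B \subset [set y | (y != x) && (red x y == false)].
  apply/subsetP => y; rewrite !inE => /andP[y_z le_yt].
  have y_x : y != x by apply: contraTneq le_yt => ->; lia.
  rewrite y_x red_sym (low_thr y y_z le_yt x); last by rewrite eq_sym.
  by rewrite /label (negPf x_z); lia.
have le_deg : coldeg false x <= #|B| by rewrite cardB; have := coldeg_sum x; lia.
move=> y y_x; have := eq_colour_subset subB le_deg y_x.
rewrite inE /label; case: (eqVneq y z) => [->|y_z]; rewrite ?eqxx ?andFb ?y_z.
all: by case: (red x y); lia.
Qed.

Lemma red_thresholdE x : x != z -> red_threshold x.
Proof.
have [k] := ubnP (level x); elim: k x => // k IHk x lt_xk x_z.
have IH y : y != z -> level y < level x -> red_threshold y.
  by move=> y_z lvl; apply: IHk => //; lia.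
by case: (ltnP (2 * deg x) m) => [low | high];
  [apply: red_threshold_low | apply: red_threshold_high].
Qed.

Lemma coldeg_centre : deg z = m./2.
Proof.
transitivity #|[set y | (y != z) && (m - m./2 <= deg y)]|.
  apply: eq_card => y; rewrite !inE; case: (eqVneq y z) => [-> // | y_z]; rewrite !andTb.
  rewrite eqb_id red_sym (red_thresholdE y_z); last by rewrite eq_sym.
  by rewrite /label eqxx; have := not_full y_z; lia.
by rewrite card_coldeg_pred count_leq_iota; lia.
Qed.

Lemma not_full_bonus_ge : m.+1./2 <= bonus true + bonus false.
Proof.
rewrite leqNgt; apply/negP => small.
have red_z x : x != z -> red x z = (m <= deg x + m./2).
  by move=> x_z; rewrite (red_thresholdE x_z) /label ?eqxx // eq_sym.
case: (boolP (odd m)) => odd_m.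
- have [|x x_z deg_x] := coldeg_onto (t := m./2 - bonus false); first lia.
  have red_xz : red x z = false by rewrite red_z //; lia.
  have := irregular x_z; rewrite red_xz (negPf x_z) eqxx.
  have := coldeg_sum x; have := coldeg_sum z; rewrite coldeg_centre; lia.
- have [|x x_z deg_x] := coldeg_onto (t := m./2 + bonus true); first lia.
  have red_xz : red x z by rewrite red_z //; lia.
  have := irregular x_z; rewrite red_xz (negPf x_z) eqxx coldeg_centre; lia.
Qed.

End TwoColouredClique.

Lemma coldeg_negb (V : finType) (red : rel V) b x :
  coldeg (fun x y => ~~ red x y) b x = coldeg red (~~ b) x.
Proof. by apply: eq_card => y; rewrite !inE; case: (red x y); case: b. Qed.

Lemma irregular_two_colouring_bonus_ge (V : finType) (z : V) (red : rel V)
    (bonus : bool -> nat) :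
  (forall x y, red x y = red y x) ->
  (forall x y, x != y ->
     coldeg red (red x y) x + (x == z) * bonus (red x y) !=
     coldeg red (red x y) y + (y == z) * bonus (red x y)) ->
  #|V|./2 <= bonus true + bonus false.
Proof.
move=> red_sym irregular.
have card_V : #|V| = #|V|.-1.+1 by rewrite prednK //; apply/card_gt0P; exists z.
rewrite card_V; move: card_V; set m := #|V|.-1 => card_V.
have [-> // | m_gt0] := posnP m.
have sum_deg := coldeg_sum red card_V.
case: (boolP [exists x, (x != z) && (coldeg red true x == m)]).
- case/existsP=> x1 /andP[x1_z /eqP full_x1].
  have nbr_x1 y : y != x1 -> red x1 y.
    move=> y_x1; apply: contraT => /negPf red_x1y.
    have : 0 < coldeg red false x1 by apply/card_gt0P; exists y; rewrite inE y_x1 red_x1y.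
    by have := sum_deg x1; lia.
  rewrite addnC.
  apply: (not_full_bonus_ge (red := fun x y => ~~ red x y) (bonus := bonus \o negb) _ card_V).
  + by move=> x y; rewrite red_sym.
  + by move=> x y x_y; rewrite !coldeg_negb /= negbK; apply: irregular.
  + move=> y y_z; rewrite coldeg_negb /=; have := sum_deg y.
    suff : 0 < coldeg red true y by lia.
    have [-> | y_x1] := eqVneq y x1; first lia.
    by apply/card_gt0P; exists x1; rewrite inE eq_sym y_x1 red_sym nbr_x1.
- rewrite negb_exists => /forallP not_full.
  apply: (not_full_bonus_ge red_sym card_V irregular) => x x_z.
  by have := sum_deg x; have := not_full x; rewrite x_z /=; lia.
Qed.

Lemma card_ord_count n (P : pred nat) : #|[set j : 'I_n | P j]| = count P (iota 0 n).
Proof.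
have -> : iota 0 n = index_iota 0 n by rewrite /index_iota subn0.
rewrite -sum1_count big_mkord -sum1_card.
by apply: eq_bigl => j; rewrite inE.
Qed.

Lemma count_iota_interval_ne a b p n :
  count (fun q => [&& a <= q, q < b & q != p]) (iota 0 n) =
  minn b n - a - ((a <= p) && (p < minn b n)).
Proof. by elim: n => [|n IHn]; [rewrite /=; lia | rewrite -addn1 iotaD count_cat IHn /=; lia]. Qed.

Definition clique_colour (k p q : nat) : nat :=
  if (p == 0) || (q == 0) then (if k < p + q then 0 else 2)
  else if 2 * k < p + q then 0 else 1.

Definition clique_deg (n k p c : nat) : nat :=
  if p == 0 then (if c == 0 then n.-1 - k else if c == 1 then 0 else k)
  else if c == 0 then n + p - 1 - 2 * k
  else if c == 1 then 2 * k - p - (p <= k) else (p <= k).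

Lemma clique_colour_lt3 k p q : clique_colour k p q < 3.
Proof. by rewrite /clique_colour; case: ifP; case: ifP. Qed.

Lemma clique_colour_sym k p q : clique_colour k p q = clique_colour k q p.
Proof. by rewrite /clique_colour orbC addnC. Qed.

Lemma count_clique_colour n k p c : 2 * k <= n <= 2 * k + 1 -> p < n -> c < 3 ->
  count (fun q => (q != p) && (clique_colour k p q == c)) (iota 0 n) = clique_deg n k p c.
Proof.
move=> /andP[n_ge n_le] p_lt c_lt.
pose interval a b q := [&& a <= q, q < b & q != p].
have split_colour q : q < n -> (q != p) && (clique_colour k p q == c) =
  if p == 0 then (if c == 0 then interval k.+1 n q else if c == 1 then false else interval 1 k.+1 q)
  else if c == 0 then interval 0 (k < p) q || interval (2 * k + 1 - p) n q
  else if c == 1 then interval 1 (2 * k + 1 - p) q else interval 0 (p <= k) q.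
  by move=> q_lt; rewrite /interval /clique_colour; repeat (case: ifP => ?); lia.
under eq_in_count => q /[!mem_iota] /andP[_ q_lt] do rewrite (split_colour q q_lt).
clear split_colour.
have [-> | [-> | ->]] : c = 0 \/ c = 1 \/ c = 2 by lia.
all: rewrite /clique_deg /=; case: (eqVneq p 0) => [p0 | p_n0];
  rewrite ?count_pred0 ?count_iota_interval_ne; try lia.
have disjoint q : interval 0 (k < p) q && interval (2 * k + 1 - p) n q = false.
  by rewrite /interval; lia.
rewrite -[LHS]/(count (predU (interval 0 (k < p)) (interval (2 * k + 1 - p) n)) (iota 0 n)).
have := count_predUI (interval 0 (k < p)) (interval (2 * k + 1 - p) n) (iota 0 n).
rewrite (eq_count disjoint) count_pred0 !count_iota_interval_ne; lia.
Qed.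

Lemma clique_deg_irregular n k d p q :
  2 * k <= n <= 2 * k + 1 -> 1 < k -> p < n -> q < n -> p != q ->
  clique_deg n k p (clique_colour k p q) + (p == 0) * (clique_colour k p q == 2) * d !=
  clique_deg n k q (clique_colour k p q) + (q == 0) * (clique_colour k p q == 2) * d.
Proof.
move=> *; rewrite /clique_deg /clique_colour.
case: (eqVneq p 0) => [p0 | p_n0]; case: (eqVneq q 0) => [q0 | q_n0];
  case: (boolP (k < p + q)) => ?; case: (boolP (2 * k < p + q)) => ? /=; lia.
Qed.

Lemma ord_le2_eqE j (a b : 'I_j) : j <= 2 -> (a == b) = ((a == 0 :> nat) == (b == 0 :> nat)).
Proof.
by move=> le_j2; rewrite -(inj_eq val_inj) /=; have := ltn_ord a; have := ltn_ord b; lia.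
Qed.

Section SplitGraph.

Variables (T : finType) (e : rel T) (n : nat) (v : 'I_n -> T) (z : 'I_n).
Local Notation X := [set v i | i : 'I_n].
Local Notation d := (dY e (~: X) (v z)).

Hypothesis e_sym : forall x y, e x y = e y x.
Hypothesis clique_edge : forall i j, e (v i) (v j) = (i != j).
Hypothesis pendant_edge : forall i y, y \notin X -> e (v i) y -> i = z.
Hypothesis pendants_stable : forall x y, x \notin X -> y \notin X -> e x y = false.

Lemma clique_inj : injective v.
Proof.
move=> i j eq_v; apply/eqP; rewrite -[i == j]negbK -clique_edge eq_v.
by rewrite clique_edge eqxx.
Qed.

Lemma card_nbrs_split i (P : pred T) :
  #|[set y | e (v i) y && P y]| =
  #|[set j | (j != i) && P (v j)]| + #|[set y | (y \notin X) && e (v i) y && P y]|.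
Proof.
rewrite -(cardsID X [set y | e (v i) y && P y]); congr (_ + _); last first.
  by apply: eq_card => y; rewrite !inE andbA.
rewrite -(card_imset _ clique_inj); apply: eq_card => y; rewrite !inE.
apply/andP/imsetP => [[/andP[e_iy Py] /imsetP[j _ y_vj]] | [j]].
  by subst y; exists j; rewrite // inE Py andbT eq_sym -clique_edge.
by rewrite inE => /andP[j_i Pj] ->; rewrite clique_edge eq_sym j_i imset_f.
Qed.

Lemma card_pendant_nbrs i (P : pred T) :
  #|[set y | (y \notin X) && e (v i) y && P y]| =
  (i == z) * #|[set y | (y \notin X) && e (v z) y && P y]|.
Proof.
have [-> | i_z] := eqVneq i z; first by rewrite mul1n.
rewrite mul0n; apply/eqP; rewrite cards_eq0; apply/eqP/setP => y; rewrite !inE.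
by apply/negbTE/negP => /andP[/andP[y_X /(pendant_edge y_X)/eqP]]; rewrite (negPf i_z).
Qed.

Lemma not_li_decomposable_lt3 j : d < n./2 -> j < 3 -> ~ li_decomposable e j.
Proof.
move=> small lt_j3 [c [c_sym c_irr]].
case: j lt_j3 c c_sym c_irr => [|j] lt_j3 c c_sym c_irr; first by case: (c (v z) (v z)).
pose red i i' := val (c (v i) (v i')) == 0.
pose bonus b := #|[set y | (y \notin X) && e (v z) y && ((val (c (v z) y) == 0) == b)]|.
have cdeg_clique col i :
    cdeg e c col (v i) = coldeg red (val col == 0) i + (i == z) * bonus (val col == 0).
  have same_colour a b : (a == b :> 'I_j.+1) = ((val a == 0) == (val b == 0)).
    exact: ord_le2_eqE.
  rewrite /cdeg card_nbrs_split card_pendant_nbrs; congr (_ + _).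
    by apply: eq_card => y; rewrite !inE same_colour.
  have [-> | _] := eqVneq i z; last by rewrite !mul0n.
  by rewrite !mul1n; apply: eq_card => y; rewrite !inE same_colour.
have bonus_sum : bonus true + bonus false = d.
  rewrite /dY -(cardsID [set y | val (c (v z) y) == 0]).
  by congr (_ + _); apply: eq_card => y; rewrite !inE; case: (val _ == 0); rewrite /= ?andbT ?andbF.
suff : n./2 <= d by rewrite leqNgt small.
rewrite -bonus_sum -[n in n./2]card_ord.
apply: (irregular_two_colouring_bonus_ge (z := z) (red := red)) => [i i' | i i' i_i'].
  by have [-> // | i_i'] := eqVneq i i'; rewrite /red c_sym // clique_edge.
have := c_irr (v i) (v i'); rewrite clique_edge !cdeg_clique.
by move=> /(_ i_i')/eqP.
Qed.

Hypothesis z_val : val z = 0.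

Local Notation k := n./2.

Definition split_colouring (x y : T) : 'I_3 :=
  match [pick i | v i == x], [pick j | v j == y] with
  | Some i, Some j => inord (clique_colour k i j)
  | _, _ => inord 2
  end.

Lemma pick_clique i : [pick j | v j == v i] = Some i.
Proof. by case: pickP => [j /eqP/clique_inj -> // | /(_ i)]; rewrite eqxx. Qed.

Lemma pick_pendant y : y \notin X -> [pick j | v j == y] = None.
Proof. by move=> y_X; case: pickP => [j /eqP vj_y | //]; rewrite -vj_y imset_f in y_X. Qed.

Lemma split_colouring_clique i j : split_colouring (v i) (v j) = inord (clique_colour k i j).
Proof. by rewrite /split_colouring !pick_clique. Qed.

Lemma split_colouring_pendant x y :
  (x \notin X) || (y \notin X) -> split_colouring x y = inord 2.
Proof.
rewrite /split_colouring; case/orP => /pick_pendant ->; first by [].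
by case: [pick i | v i == x].
Qed.

Lemma cdeg_split_clique (col : 'I_3) i :
  cdeg e split_colouring col (v i) = clique_deg n k i col + (i == z) * (col == 2 :> nat) * d.
Proof.
rewrite /cdeg card_nbrs_split card_pendant_nbrs; congr (_ + _).
  rewrite -count_clique_colour ?ltn_ord //; last by lia.
  rewrite -card_ord_count; apply: eq_card => j; rewrite !inE split_colouring_clique.
  by rewrite -!val_eqE /= inordK // clique_colour_lt3.
have [-> | _] := eqVneq i z; last by rewrite !mul0n.
rewrite mul1n /dY; have [col2 | col_n2] := eqVneq (val col) 2.
  rewrite mul1n; apply: eq_card => y; rewrite !inE.
  case: (boolP (y \in X)) => //= y_X.
  by rewrite split_colouring_pendant ?y_X ?orbT // -val_eqE /= col2 inordK // andbT.
rewrite mul0n; apply: eq_card0 => y; rewrite !inE.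
case: (boolP (y \in X)) => //= y_X; rewrite split_colouring_pendant ?y_X ?orbT //.
by rewrite -val_eqE /= inordK // eq_sym (negPf col_n2) andbF.
Qed.

Lemma cdeg_split_pendant (col : 'I_3) y :
  y \notin X -> e (v z) y -> cdeg e split_colouring col y = (col == 2 :> nat).
Proof.
move=> y_X e_zy; have nbr_y w : e y w = (w == v z).
  apply/idP/eqP => [e_yw | ->]; last by rewrite e_sym.
  case: (boolP (w \in X)) => [/imsetP[j _ w_vj] | w_X]; last by rewrite pendants_stable in e_yw.
  by rewrite w_vj (pendant_edge y_X (_ : e (v j) y)) // -w_vj e_sym.
transitivity #|[set w | (w == v z) && (val col == 2)]|.
  apply: eq_card => w; rewrite !inE nbr_y split_colouring_pendant ?y_X //.
  by rewrite -val_eqE /= inordK // [2 == _]eq_sym.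
case: (val col == 2); last by apply: eq_card0 => w; rewrite inE andbF.
by rewrite /=; apply: (@eq_card1 _ (v z)) => w; rewrite inE andbT.
Qed.

Lemma li_decomposable_3 : 3 < n -> li_decomposable e 3.
Proof.
move=> n_gt3; have k_bounds : 2 * k <= n <= 2 * k + 1 by lia.
have eq_z w : (w == z) = (val w == 0) by rewrite -val_eqE z_val.
exists split_colouring; split.
  move=> x y _; rewrite /split_colouring.
  case: [pick i | v i == x] => [i|]; case: [pick j | v j == y] => [j|] //.
  by rewrite clique_colour_sym.
move=> x y e_xy.
case: (boolP (x \in X)) => [/imsetP[i _ x_vi] | x_X];
  case: (boolP (y \in X)) => [/imsetP[j _ y_vj] | y_X].
- subst x y; rewrite split_colouring_clique !cdeg_split_clique !inordK ?clique_colour_lt3 //.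
  rewrite !eq_z; apply/eqP; apply: clique_deg_irregular; rewrite ?ltn_ord //; first lia.
  by rewrite val_eqE -clique_edge.
- subst x; have i_z := pendant_edge y_X e_xy; subst i.
  rewrite split_colouring_pendant ?y_X ?orbT // cdeg_split_clique cdeg_split_pendant // !inordK //.
  by rewrite eqxx /clique_deg z_val /=; lia.
- subst y; rewrite e_sym in e_xy; have j_z := pendant_edge x_X e_xy; subst j.
  rewrite split_colouring_pendant ?x_X // cdeg_split_clique cdeg_split_pendant // !inordK //.
  by rewrite eqxx /clique_deg z_val /=; lia.
- by rewrite pendants_stable in e_xy.
Qed.

End SplitGraph.

Theorem lemma2p3 (T : finType) (e : rel T) (n : nat) (v : 'I_n -> T)
  (Hg : simple_graph e)
  (Hn : 4 <= n)
  (Hinj : injective v)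
  (HX : maximal_clique e [set v i | i : 'I_n])
  (HY : stable e (~: [set v i | i : 'I_n]))
  (Hsort : forall i j : 'I_n, i <= j ->
     dY e (~: [set v i | i : 'I_n]) (v j) <= dY e (~: [set v i | i : 'I_n]) (v i))
  (Hd1 : forall i : 'I_n, val i = 0 -> dY e (~: [set v i | i : 'I_n]) (v i) < n./2)
  (Hd2 : forall i : 'I_n, val i = 1 -> dY e (~: [set v i | i : 'I_n]) (v i) = 0) :
  irr_chromatic_index_is e 3.
Proof.
have [e_sym e_irr] := Hg.
have n_gt1 : 1 < n by lia.
pose z : 'I_n := Ordinal (ltnW n_gt1); pose i1 : 'I_n := Ordinal n_gt1.
have clique_edge i j : e (v i) (v j) = (i != j).
  have [-> | i_j] := eqVneq i j; first exact/negbTE/e_irr.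
  by apply: HX.1; rewrite ?imset_f // (inj_eq Hinj).
have pendant_edge i y : y \notin [set v i | i : 'I_n] -> e (v i) y -> i = z.
  move=> y_X e_iy; apply/val_inj/eqP; apply: contraTT e_iy; rewrite -lt0n => i_gt0.
  have := Hsort i1 i i_gt0; rewrite (Hd2 i1) // leqn0 cards_eq0 => /eqP/setP/(_ y).
  by rewrite !inE y_X /= => ->.
have pendants_stable x y :
    x \notin [set v i | i : 'I_n] -> y \notin [set v i | i : 'I_n] -> e x y = false.
  by move=> x_X y_X; apply/negbTE/HY; rewrite inE.
split; first exact: (li_decomposable_3 e_sym clique_edge pendant_edge pendants_stable).
by move=> j; apply: (not_li_decomposable_lt3 clique_edge pendant_edge); exact: Hd1.
Qed.
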